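(* Let $F_1,F_2\colon \mathbb{R}^n \rightrightarrows \mathbb{R}^m$ be nearly convex set-valued mappings and $\varepsilon\ge 0$. Suppose that $$\mathrm{ri}(\mathrm{dom}\, F_1) \cap \mathrm{ri}(\mathrm{dom}\, F_2) \neq\emptyset .$$ Let $(\bar x,\bar y)\in\mathrm{gph}(F_1+F_2)$, where $(F_1+F_2)(x)=F_1(x)+F_2(x)$, and let $S(\bar x, \bar y)=\{(\bar y_1, \bar y_2) \in \mathbb{R}^m \times \mathbb{R}^m \mid \bar y=\bar y_1 +\bar y_2,\ \bar y_i\in F_i(\bar x),\ i=1,2 \}$. Then for every $v\in \mathbb{R}^m$ and every $(\bar y_1, \bar y_2) \in S(\bar x, \bar y)$, $$D^*_\varepsilon(F_1+F_2)(\bar x, \bar y)(v)=\bigcup_{\substack{\varepsilon_1\geq 0,\ \varepsilon_2\geq 0,\\ \varepsilon_1+\varepsilon_2=\varepsilon}}\big[D^*_{\varepsilon_1} F_1(\bar x, \bar y_1)(v)+D^*_{\varepsilon_2}F_2 (\bar x, \bar y_2)(v)\big].$$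
   Context: A set $D$ is nearly convex if there is a convex $E$ with $E\subset D\subset\overline{E}$. A set-valued mapping $F\colon\mathbb{R}^n\rightrightarrows\mathbb{R}^m$ has domain $\mathrm{dom}\,F=\{x\mid F(x)\ne\emptyset\}$ and graph $\mathrm{gph}\,F=\{(x,y)\mid y\in F(x)\}$; it is nearly convex if its graph is nearly convex. $\mathrm{ri}\,D=\{a\in D\mid\exists\delta>0,\ B(a;\delta)\cap\mathrm{aff}\,D\subset D\}$. For nonempty $\Omega$, $\bar z\in\Omega$, $\varepsilon\ge0$: $N_\varepsilon(\bar z;\Omega)=\{\xi\mid\langle\xi,z-\bar z\rangle\le\varepsilon\ \forall z\in\Omega\}$. For $(\bar x,\bar y)\in\mathrm{gph}\,F$, the $\varepsilon$-coderivative is $D^*_\varepsilon F(\bar x,\bar y)(v)=\{u\in\mathbb{R}^n\mid(u,-v)\in N_\varepsilon((\bar x,\bar y);\mathrm{gph}\,F)\}$. Sums of sets are Minkowski sums. *)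

From HB Require Import structures.
From mathcomp Require Import all_boot all_order all_algebra.
From mathcomp Require Import all_classical all_reals all_analysis.
Set Implicit Arguments. Unset Strict Implicit. Unset Printing Implicit Defensive.
Import Order.TTheory GRing.Theory Num.Theory.
Import numFieldNormedType.Exports.
Local Open Scope classical_set_scope.
Local Open Scope ring_scope.

Section Defs.
Variable R : realType.

Definition dotv (n : nat) (u v : 'rV[R]_n) : R := \sum_(i < n) u ord0 i * v ord0 i.

Definition dotp (n m : nat) (p q : 'rV[R]_n * 'rV[R]_m) : R :=
  dotv p.1 q.1 + dotv p.2 q.2.

Definition convex_pair (n m : nat) (E : set ('rV[R]_n * 'rV[R]_m)) : Prop :=
  forall p q t, E p -> E q -> 0 <= t -> t <= 1 ->
    E (t *: p.1 + (1 - t) *: q.1, t *: p.2 + (1 - t) *: q.2).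

Definition nearly_convex_pair (n m : nat) (D : set ('rV[R]_n * 'rV[R]_m)) : Prop :=
  exists E, convex_pair E /\ E `<=` D /\ D `<=` closure E.

Definition dom (n m : nat) (F : 'rV[R]_n -> set 'rV[R]_m) : set 'rV[R]_n :=
  [set x | F x !=set0].

Definition gph (n m : nat) (F : 'rV[R]_n -> set 'rV[R]_m) : set ('rV[R]_n * 'rV[R]_m) :=
  [set p | F p.1 p.2].

Definition nearly_convex_map (n m : nat) (F : 'rV[R]_n -> set 'rV[R]_m) : Prop :=
  nearly_convex_pair (gph F).

Definition aff (n : nat) (D : set 'rV[R]_n) : set 'rV[R]_n :=
  [set x | exists (k : nat) (pts : 'I_k -> 'rV[R]_n) (w : 'I_k -> R),
      (forall i, D (pts i)) /\ \sum_(i < k) w i = 1 /\ x = \sum_(i < k) w i *: pts i].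

Definition ri (n : nat) (D : set 'rV[R]_n) : set 'rV[R]_n :=
  [set a | D a /\ exists delta : R, 0 < delta /\ ball a delta `&` aff D `<=` D].

Definition eps_normal (n m : nat) (eps : R) (zbar : 'rV[R]_n * 'rV[R]_m)
    (Omega : set ('rV[R]_n * 'rV[R]_m)) : set ('rV[R]_n * 'rV[R]_m) :=
  [set xi | forall z, Omega z -> dotp xi (z.1 - zbar.1, z.2 - zbar.2) <= eps].

Definition eps_coder (n m : nat) (eps : R) (F : 'rV[R]_n -> set 'rV[R]_m)
    (xbar : 'rV[R]_n) (ybar : 'rV[R]_m) (v : 'rV[R]_m) : set 'rV[R]_n :=
  [set u | eps_normal eps (xbar, ybar) (gph F) (u, - v)].

Definition mink_sum (k : nat) (A B : set 'rV[R]_k) : set 'rV[R]_k :=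
  [set z | exists a b, A a /\ B b /\ z = a + b].

Definition map_sum (n m : nat) (F1 F2 : 'rV[R]_n -> set 'rV[R]_m) : 'rV[R]_n -> set 'rV[R]_m :=
  fun x => mink_sum (F1 x) (F2 x).

End Defs.

From HB Require Import structures.
From mathcomp Require Import all_boot all_order all_algebra.
From mathcomp Require Import all_classical all_reals all_analysis.
From mathcomp Require Import ring lra.
Import Order.TTheory GRing.Theory Num.Theory.
Import numFieldNormedType.Exports.
Local Open Scope classical_set_scope.
Local Open Scope ring_scope.
Set Implicit Arguments. Unset Strict Implicit. Unset Printing Implicit Defensive.

(* The inclusion from right to left is a direct computation.  For the other one,
   pick convex E_i with E_i ⊆ gph F_i ⊆ cl E_i.  A convex set and its closure have
   the same relative interior, so ri (dom F_i) lies in the projection of E_i, and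
   from a common point x0 of the relative interiors one can move a little along
   any direction of the affine hulls without leaving these projections.
   Given u in the ε-coderivative of F1 + F2, the set S of pairs
   (x' - x, <u, x - x̄> - <v, a - y1> - <v, b - y2>), (x, a) ∈ E1, (x', b) ∈ E2,
   is convex, its values above z = 0 are at most ε, and together with z it
   contains some -λz, λ > 0.  A finite-dimensional Hahn-Banach argument,
   extending a linear majorant one coordinate at a time, gives g with
   t ≤ ε + <g, z> on S.  Then u = (u + g) + (-g), and ε splits as e1 + e2 where
   e2 is the supremum over E2 of the functional attached to -g; both estimates
   pass from E_i to cl E_i ⊇ gph F_i by continuity. *)

Section inner_product.
Variable R : realType.

Lemma dotvDl n (w1 w2 z : 'rV[R]_n) : dotv (w1 + w2) z = dotv w1 z + dotv w2 z.
Proof. by rewrite /dotv -big_split; apply: eq_bigr => i _; rewrite mxE mulrDl. Qed.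

Lemma dotvDr n (w z1 z2 : 'rV[R]_n) : dotv w (z1 + z2) = dotv w z1 + dotv w z2.
Proof. by rewrite /dotv -big_split; apply: eq_bigr => i _; rewrite mxE mulrDr. Qed.

Lemma dotvZl n a (w z : 'rV[R]_n) : dotv (a *: w) z = a * dotv w z.
Proof. by rewrite /dotv mulr_sumr; apply: eq_bigr => i _; rewrite mxE mulrA. Qed.

Lemma dotvZr n a (w z : 'rV[R]_n) : dotv w (a *: z) = a * dotv w z.
Proof. by rewrite /dotv mulr_sumr; apply: eq_bigr => i _; rewrite mxE mulrCA. Qed.

Lemma dotvNl n (w z : 'rV[R]_n) : dotv (- w) z = - dotv w z.
Proof. by rewrite -scaleN1r dotvZl mulN1r. Qed.

Lemma dotvNr n (w z : 'rV[R]_n) : dotv w (- z) = - dotv w z.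
Proof. by rewrite -scaleN1r dotvZr mulN1r. Qed.

Lemma dotvBr n (w z1 z2 : 'rV[R]_n) : dotv w (z1 - z2) = dotv w z1 - dotv w z2.
Proof. by rewrite dotvDr dotvNr. Qed.

Lemma dotv0l n (z : 'rV[R]_n) : dotv 0 z = 0.
Proof. by rewrite -(scale0r 0) dotvZl mul0r. Qed.

Lemma dotv0r n (w : 'rV[R]_n) : dotv w 0 = 0.
Proof. by rewrite -(scale0r 0) dotvZr mul0r. Qed.

Lemma dotv_convexB n (w a b c : 'rV[R]_n) mu :
  dotv w (mu *: a + (1 - mu) *: b - c) = mu * dotv w (a - c) + (1 - mu) * dotv w (b - c).
Proof.
have -> : mu *: a + (1 - mu) *: b - c = mu *: (a - c) + (1 - mu) *: (b - c).
  by apply/rowP => j; rewrite !mxE; ring.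
by rewrite [LHS]dotvDr !dotvZr.
Qed.

Lemma dotv_delta n (i : 'I_n) (z : 'rV[R]_n) : dotv (delta_mx ord0 i) z = z ord0 i.
Proof.
rewrite /dotv (bigD1 i) //= big1 => [|j /negPf ji]; last by rewrite mxE ji andbF mul0r.
by rewrite mxE !eqxx mul1r addr0.
Qed.

Lemma dotv_continuous n (w : 'rV[R]_n) : continuous (dotv w).
Proof.
apply: (@continuous_big R _ +%R 0 xpredT add_continuous) => i _ z.
by apply: continuousM; [exact: cst_continuous | exact: coord_continuous].
Qed.

Lemma dotp_continuous n m (w : 'rV[R]_n * 'rV[R]_m) : continuous (dotp w).
Proof.
move=> z; apply: (@continuousD R R^o _ (fun p => dotv w.1 p.1) (fun p => dotv w.2 p.2)).
  by apply: continuous_comp; [exact: cvg_fst | exact: dotv_continuous].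
by apply: continuous_comp; [exact: cvg_snd | exact: dotv_continuous].
Qed.

End inner_product.

Lemma closure_sub_preimage (T U : topologicalType) (f : T -> U) (A : set T) (B : set U) :
  continuous f -> closed B -> A `<=` f @^-1` B -> closure A `<=` f @^-1` B.
Proof.
move=> fc Bc AB; have /closure_id -> : closed (f @^-1` B).
  by apply: preimage_closed => // x _; exact: fc.
exact: closureS.
Qed.

Section row_vector_topology.
Variable R : realType.

Lemma ball_rVE n (c z : 'rV[R]_n) e :
  ball c e z <-> 0 < e /\ forall j, `|c ord0 j - z ord0 j| < e.
Proof.
split=> -[e0 cz]; split=> //.
  by move=> j; have := cz ord0 j; rewrite -ball_normE.
by move=> i j; rewrite (ord1 i) -ball_normE; exact: cz.
Qed.

Lemma closure_rVP n (Z : set 'rV[R]_n) c : closure Z c <->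
  forall eta : R, 0 < eta -> exists2 z, Z z & forall j, `|c ord0 j - z ord0 j| < eta.
Proof.
split=> [cl eta eta0|approx B /nbhs_ballP [e e0 eB]].
  by have [z [Zz /ball_rVE [_ cz]]] := cl _ (nbhsx_ballx c eta eta0); exists z.
by have [z Zz cz] := approx e e0; exists z; split=> //; apply/eB/ball_rVE.
Qed.

Lemma continuous_rV (T : topologicalType) n (f : T -> 'rV[R]_n) :
  (forall j, continuous (fun x => f x ord0 j)) -> continuous f.
Proof.
move=> fc x; apply/cvg_ballP => e e0.
have : \forall y \near x, forall j, ball (f x ord0 j) e (f y ord0 j).
  by apply: filter_forall => j; have /cvg_ballP := fc j x; apply.
by apply: filterS => y fy; apply/ball_rVE; split=> // j; have := fy j; rewrite -ball_normE.
Qed.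

Lemma affine_rV_continuous p q (y : 'rV[R]_q) (B : 'M[R]_(p, q)) :
  continuous (fun a : 'rV[R]_p => y + a *m B).
Proof.
apply: continuous_rV => j a; rewrite /=.
under eq_fun do rewrite !mxE.
apply: (@continuousD R R^o _ (fun=> y ord0 j)); first exact: cst_continuous.
apply: (@continuous_big R _ +%R 0 xpredT add_continuous) => i _ b.
by apply: continuousM; [exact: coord_continuous | exact: cst_continuous].
Qed.

End row_vector_topology.

Section real_bounds.
Variable R : realType.

Lemma ubound_lbound_between (A B : set R) :
  (forall a b, A a -> B b -> a <= b) -> (A !=set0 <-> B !=set0) ->
  exists beta, ubound A beta /\ lbound B beta.
Proof.
move=> AB [AB0 BA0]; have [[a Aa]|A0] := pselect (A !=set0).
  have [b Bb] := AB0 (ex_intro _ a Aa).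
  exists (sup A); split.
    by apply: sup_upper_bound; split; [exists a | exists b => x /AB; apply].
  by move=> x Bx; apply: ge_sup; [exists a | move=> y /AB; apply].
exists 0; split=> x Ax; exfalso; first by apply: A0; exists x.
by apply: A0; apply: BA0; exists x.
Qed.

Lemma split_bound (T1 T2 : Type) (A : set T1) (B : set T2) (f : T1 -> R) (g : T2 -> R) eps :
  A !=set0 -> B !=set0 -> (forall p q, A p -> B q -> f p + g q <= eps) ->
  exists e1 e2, [/\ e1 + e2 = eps, forall p, A p -> f p <= e1 & forall q, B q -> g q <= e2].
Proof.
move=> [p0 Ap0] [q0 Bq0] fg.
have gB_ub : ubound (g @` B) (eps - f p0).
  by move=> _ [q Bq <-]; rewrite lerBrDl; exact: fg.
exists (eps - sup (g @` B)), (sup (g @` B)); split; first by rewrite subrK.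
  move=> p Ap; rewrite lerBrDr addrC -lerBrDr; apply: ge_sup; first by exists (g q0), q0.
  by move=> _ [q Bq <-]; rewrite lerBrDl; exact: fg.
move=> q Bq; apply: sup_upper_bound; last by exists q.
by split; [exists (g q0), q0 | exists (eps - f p0)].
Qed.

End real_bounds.

Section vanishing_coordinates.
Variable R : realType.

Definition zero_from n k (z : 'rV[R]_n) := forall i : 'I_n, (k <= i)%N -> z ord0 i = 0.

Lemma zero_from0 n (z : 'rV[R]_n) : zero_from 0 z -> z = 0.
Proof. by move=> z0; apply/rowP => j; rewrite mxE z0. Qed.

Lemma zero_from_size n (z : 'rV[R]_n) : zero_from n z.
Proof. by move=> i; rewrite leqNgt ltn_ord. Qed.

Lemma zero_fromS n k (hk : (k < n)%N) (z : 'rV[R]_n) :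
  zero_from k.+1 z -> z ord0 (Ordinal hk) = 0 -> zero_from k z.
Proof.
move=> zk zi i; rewrite leq_eqVlt => /orP [/eqP ki | ]; last exact: zk.
by rewrite (_ : i = Ordinal hk) //; apply/val_inj.
Qed.

Lemma zero_from_comb n k a b (z1 z2 : 'rV[R]_n) :
  zero_from k z1 -> zero_from k z2 -> zero_from k (a *: z1 + b *: z2).
Proof. by move=> z1k z2k i ki; rewrite !mxE z1k // z2k // !mulr0 addr0. Qed.

End vanishing_coordinates.

Section linear_majorant.
Variables (R : realType) (n : nat) (S : 'rV[R]_n -> R -> Prop) (eps : R).
Hypothesis S_convex : forall z1 t1 z2 t2 mu, S z1 t1 -> S z2 t2 -> 0 <= mu -> mu <= 1 ->
  S (mu *: z1 + (1 - mu) *: z2) (mu * t1 + (1 - mu) * t2).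
Hypothesis S_le_at0 : forall t, S 0 t -> t <= eps.
Hypothesis S_opposite : forall z t, S z t -> exists lam t', 0 < lam /\ S (- (lam *: z)) t'.

Definition majorant_on k (g : 'rV[R]_n) :=
  forall z t, S z t -> zero_from k z -> t <= eps + dotv g z.

Lemma majorant_on0 : majorant_on 0 0.
Proof.
by move=> z t Szt /zero_from0 z0; rewrite dotv0l addr0; apply: S_le_at0; rewrite -z0.
Qed.

Section extension.
Variables (k : nat) (hk : (k < n)%N) (g : 'rV[R]_n).
Hypothesis g_maj : majorant_on k g.
Let i0 := Ordinal hk.
Let slope z t := (t - eps - dotv g z) / z ord0 i0.

Lemma slope_le z1 t1 z2 t2 : S z1 t1 -> S z2 t2 -> zero_from k.+1 z1 -> zero_from k.+1 z2 ->
  0 < z1 ord0 i0 -> z2 ord0 i0 < 0 -> slope z1 t1 <= slope z2 t2.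
Proof.
move=> S1 S2 z1k z2k c1_gt0 c2_lt0; rewrite /slope.
set c1 := z1 ord0 i0 in c1_gt0 *; set c2 := z2 ord0 i0 in c2_lt0 *.
set d1 := dotv g z1; set d2 := dotv g z2.
have c12 : 0 < c1 - c2 by rewrite subr_gt0 (lt_trans c2_lt0).
pose mu := - c2 / (c1 - c2).
have mu0 : 0 <= mu by rewrite divr_ge0 // ?oppr_ge0 ltW.
have mu1 : mu <= 1 by rewrite ler_pdivrMr // mul1r; lra.
have := g_maj (S_convex S1 S2 mu0 mu1) _.
rewrite dotvDr !dotvZr -/d1 -/d2 => comb_le.
have {}comb_le : mu * t1 + (1 - mu) * t2 <= eps + (mu * d1 + (1 - mu) * d2).
  apply: comb_le; apply: zero_fromS (zero_from_comb _ _ z1k z2k) _.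
  by rewrite !mxE -/c1 -/c2 /mu; field; exact: lt0r_neq0.
have key : - c2 * (t1 - eps - d1) + c1 * (t2 - eps - d2) <= 0.
  have -> : - c2 * (t1 - eps - d1) + c1 * (t2 - eps - d2) =
      (c1 - c2) * (mu * t1 + (1 - mu) * t2 - (eps + (mu * d1 + (1 - mu) * d2))).
    by rewrite /mu; field; exact: lt0r_neq0.
  by rewrite pmulr_rle0 // subr_le0.
rewrite ler_pdivrMr // mulrAC ler_ndivlMr //; lra.
Qed.

Lemma majorant_on_succ : exists g', majorant_on k.+1 g'.
Proof.
pose A := [set a | exists z t, [/\ S z t, zero_from k.+1 z, 0 < z ord0 i0 & a = slope z t]].
pose B := [set b | exists z t, [/\ S z t, zero_from k.+1 z, z ord0 i0 < 0 & b = slope z t]].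
have flip z t : S z t -> zero_from k.+1 z -> exists z' t',
    [/\ S z' t', zero_from k.+1 z', 0 < z ord0 i0 -> z' ord0 i0 < 0
      & z ord0 i0 < 0 -> 0 < z' ord0 i0].
  move=> /S_opposite [lam [t' [lam_gt0 S']]] zk; exists (- (lam *: z)), t'; split => //.
  - by move=> i ki; rewrite !mxE zk // mulr0 oppr0.
  - by rewrite !mxE oppr_lt0; exact: mulr_gt0.
  - by rewrite !mxE oppr_gt0 pmulr_rlt0.
have [beta [A_le B_ge]] : exists beta, ubound A beta /\ lbound B beta.
  apply: ubound_lbound_between.
  - by move=> _ _ [z1 [t1 [S1 z1k c1 ->]]] [z2 [t2 [S2 z2k c2 ->]]]; exact: slope_le.
  split=> [[_ [z [t [Szt zk c _]]]] | [_ [z [t [Szt zk c _]]]]].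
    by have [z' [t' [S' z'k /(_ c) c' _]]] := flip z t Szt zk; exists (slope z' t'), z', t'.
  by have [z' [t' [S' z'k _ /(_ c) c']]] := flip z t Szt zk; exists (slope z' t'), z', t'.
exists (g + beta *: delta_mx ord0 i0) => z t Szt zk.
rewrite dotvDl dotvZl dotv_delta.
case: (ltrgtP (z ord0 i0) 0) => [zn | zp | z0].
- have := B_ge (slope z t) (ex_intro _ z (ex_intro _ t (And4 Szt zk zn erefl))).
  by rewrite /slope ler_ndivlMr //; lra.
- have := A_le (slope z t) (ex_intro _ z (ex_intro _ t (And4 Szt zk zp erefl))).
  by rewrite /slope ler_pdivrMr //; lra.
- by rewrite z0 mulr0 addr0; apply: g_maj => //; exact: zero_fromS zk z0.
Qed.

End extension.

Lemma linear_majorant : exists g, forall z t, S z t -> t <= eps + dotv g z.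
Proof.
suff [g g_maj] : exists g, majorant_on n g.
  by exists g => z t Szt; exact: g_maj (zero_from_size z).
suff : forall k, (k <= n)%N -> exists g, majorant_on k g by apply.
elim=> [_ | k IH hk]; first by exists 0; exact: majorant_on0.
by have [g g_maj] := IH (ltnW hk); exact: majorant_on_succ g_maj.
Qed.

End linear_majorant.

Section convex_closure_nbhs.
Variable R : realType.

Definition convex_rV n (Z : set 'rV[R]_n) :=
  forall z1 z2 mu, Z z1 -> Z z2 -> 0 <= mu -> mu <= 1 -> Z (mu *: z1 + (1 - mu) *: z2).

Variable r : nat.

(* Induction on [k]: the part of [Z] on either side of the hyperplane [z_k = 0],
   projected onto it, is an instance of dimension [k]. *)
Definition dense_box_mem0 k := forall Z : set 'rV[R]_r, convex_rV Z ->
  (forall z, Z z -> zero_from k z) -> forall delta, 0 < delta ->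
  (forall c, zero_from k c -> (forall j, `|c ord0 j| < delta) -> closure Z c) -> Z 0.

Lemma dense_box_mem0_0 : dense_box_mem0 0.
Proof.
move=> Z _ Z0 delta delta_gt0 Zbox.
have /closure_rVP /(_ 1 ltr01) [z Zz _] : closure Z 0.
  by apply: Zbox => [i _ | j]; rewrite mxE ?normr0.
by rewrite -(zero_from0 (Z0 z Zz)).
Qed.

Section dense_box_step.
Variables (k : nat) (hk : (k < r)%N) (Z : set 'rV[R]_r) (delta : R).
Hypothesis IH : dense_box_mem0 k.
Hypotheses (Z_convex : convex_rV Z) (Z_zero : forall z, Z z -> zero_from k.+1 z).
Hypothesis delta_gt0 : 0 < delta.
Hypothesis Z_box : forall c, zero_from k.+1 c -> (forall j, `|c ord0 j| < delta) -> closure Z c.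
Let i0 := Ordinal hk.
Let e0 : 'rV[R]_r := delta_mx ord0 i0.

Section slice.
Variable sg : R.

Definition slice w := exists2 z, Z z & delta / 4 <= sg * z ord0 i0 /\ w = z - z ord0 i0 *: e0.

Lemma slice_convex : convex_rV slice.
Proof.
move=> _ _ mu [z1 Z1 [h1 ->]] [z2 Z2 [h2 ->]] mu0 mu1.
exists (mu *: z1 + (1 - mu) *: z2); first exact: Z_convex.
by split; [rewrite !mxE; nra | apply/rowP => j; rewrite !mxE; ring].
Qed.

Lemma slice_zero w : slice w -> zero_from k w.
Proof.
move=> [z Zz [_ ->]] i ki; rewrite !mxE.
have [-> | /negPf ii0] := eqVneq i i0; first by rewrite mulr1 subrr.
rewrite andbF mulr0 subr0; apply: Z_zero => //.
by rewrite ltn_neqAle ki andbT; apply: contraFneq ii0 => ki'; apply/eqP/val_inj.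
Qed.

(* [c] is approximated by slices of points of [Z] close to [c + sg (delta / 2) e0]. *)
Lemma slice_box : `|sg| = 1 ->
  forall c, zero_from k c -> (forall j, `|c ord0 j| < delta / 2) -> closure slice c.
Proof.
move=> sg_norm c ck c_small; apply/closure_rVP => eta eta_gt0.
have delta4_gt0 : 0 < delta / 4 by rewrite divr_gt0.
pose c' := c + (sg * (delta / 2)) *: e0.
have c'i0 : c' ord0 i0 = sg * (delta / 2) by rewrite !mxE ck // !eqxx mulr1 add0r.
have c'j j : j != i0 -> c' ord0 j = c ord0 j.
  by move=> /negPf ji0; rewrite !mxE ji0 andbF mulr0 addr0.
have c'k : zero_from k.+1 c'.
  move=> i ki; have ii0 : i != i0 by apply: contraTneq ki => ->; rewrite ltnn.
  by rewrite c'j // ck // ltnW.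
have /closure_rVP /(_ (Num.min eta (delta / 4))) [|z Zz zc'] : closure Z c'.
- apply: Z_box c'k _ => j; have [-> | ji0] := eqVneq j i0.
    by rewrite c'i0 normrM sg_norm mul1r ger0_norm; lra.
  by rewrite c'j //; apply: lt_trans (c_small j) _; lra.
- by rewrite lt_min eta_gt0 divr_gt0.
exists (z - z ord0 i0 *: e0).
  exists z => //; split => //.
  have := zc' i0; rewrite lt_min c'i0 => /andP [_]; rewrite ltr_norml => /andP [h1 h2].
  move/eqP: sg_norm; rewrite eqr_norml => /andP [/orP [] /eqP sgE _];
    by rewrite sgE in h1 h2 *; lra.
move=> j; rewrite !mxE; have [-> | ji0] := eqVneq j i0.
  by rewrite ck // mulr1 subrr subr0 normr0.
rewrite andbF mulr0 subr0 -c'j //.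
by have := zc' j; rewrite lt_min => /andP [].
Qed.

Lemma dense_box_axis : `|sg| = 1 -> exists2 a : R, delta / 4 <= sg * a & Z (a *: e0).
Proof.
move=> sg_norm.
have delta2_gt0 : 0 < delta / 2 by rewrite divr_gt0.
have [z Zz [za /esym/subr0_eq zE]] := IH slice_convex slice_zero delta2_gt0 (slice_box sg_norm).
by exists (z ord0 i0) => //; rewrite -zE.
Qed.

End slice.

Lemma dense_box_step : Z 0.
Proof.
have [a a_ge Za] := dense_box_axis (normr1 R).
have [b b_ge Zb] := dense_box_axis (etrans (normrN 1) (normr1 R)).
rewrite mul1r in a_ge; rewrite mulN1r in b_ge.
have delta4_gt0 : 0 < delta / 4 by rewrite divr_gt0.
have ab : 0 < a - b by lra.
pose mu := - b / (a - b).
have -> : 0 = mu *: (a *: e0) + (1 - mu) *: (b *: e0).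
  by rewrite !scalerA -scalerDl (_ : _ + _ = 0) ?scale0r // /mu; field; exact: lt0r_neq0.
apply: Z_convex => //; first by rewrite divr_ge0 //; lra.
by rewrite ler_pdivrMr //; lra.
Qed.

End dense_box_step.

Lemma convex_closure_nbhs0 (Z : set 'rV[R]_r) :
  convex_rV Z -> nbhs (0 : 'rV[R]_r) (closure Z) -> Z 0.
Proof.
move=> Z_convex /nbhs_ballP [e e_gt0 eZ].
suff /(_ r (leqnn r)) : forall k, (k <= r)%N -> dense_box_mem0 k.
  move=> /(_ Z Z_convex (fun z _ => zero_from_size z) e e_gt0); apply=> c _ c_small.
  by apply/eZ/ball_rVE; split=> // j; rewrite mxE sub0r normrN.
elim=> [_ | k IH hk]; first exact: dense_box_mem0_0.
move=> Z' Z'_convex Z'_zero delta delta_gt0.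
exact: dense_box_step (IH (ltnW hk)) Z'_convex Z'_zero delta_gt0.
Qed.

End convex_closure_nbhs.

Section relative_interior.
Variable R : realType.

Lemma aff_comb n (D : set 'rV[R]_n) y s (M : 'M[R]_(s, n)) (a : 'rV[R]_s) :
  D y -> (forall i, D (y + row i M)) -> aff D (y + a *m M).
Proof.
move=> Dy DM; exists s.+1.
exists (fun i => if unlift ord0 i is Some j then y + row j M else y).
exists (fun i => if unlift ord0 i is Some j then a ord0 j else 1 - \sum_j a ord0 j).
split; first by move=> i; case: (unlift ord0 i).
rewrite !big_ord_recl !unlift_none; split.
  by under [X in _ + X]eq_bigr => i _ do rewrite liftK; rewrite subrK.
under [X in _ = _ + X]eq_bigr => i _ do rewrite liftK scalerDr.
rewrite mulmx_sum_row.
by rewrite big_split /= -scaler_suml scalerBl scale1r addrA subrK.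
Qed.

Lemma aff_prolong n (D : set 'rV[R]_n) y x s : D y -> D x -> aff D (y + s *: (y - x)).
Proof.
move=> Dy Dx; have := @aff_comb n D y 1 (x - y) (const_mx (- s)) Dy.
have -> : const_mx (- s) *m (x - y) = s *: (y - x).
  by apply/rowP => j; rewrite !mxE big_ord1 !mxE; ring.
apply=> i; rewrite (_ : row i (x - y) = x - y); first by rewrite addrC subrK.
by apply/rowP => j; rewrite !mxE (ord1 i).
Qed.

Lemma affine_frame n (D : set 'rV[R]_n) y : D y -> exists s (M : 'M[R]_(s, n)),
  (forall i, D (y + row i M)) /\ forall d, D d -> (d - y <= M)%MS.
Proof.
move=> Dy.
pose frame k := exists s (M : 'M[R]_(s, n)), (forall i, D (y + row i M)) /\ \rank M = k.
have frame0 : exists k, `[< frame k >].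
  by exists 0%N; apply/asboolP; exists 0%N, 0; split=> [[] // | ]; rewrite mxrank0.
have frame_le k : `[< frame k >] -> (k <= n)%N.
  by move=> /asboolP [s [M [_ <-]]]; exact: rank_leq_col.
case: (ex_maxnP frame0 frame_le) => k /asboolP [s [M [DM rankM]]] kmax.
exists s, M; split=> // d Dd; apply/negP => dyM.
pose M' := col_mx M (d - y).
have : `[< frame (\rank M') >].
  apply/asboolP; exists (s + 1)%N, M'; split=> // i.
  case: (splitP i) => [i1 ei | i2 ei].
    by rewrite (_ : i = lshift 1 i1) ?rowKu //; exact: val_inj.
  rewrite (_ : i = rshift s i2); last exact: val_inj.
  rewrite rowKd (_ : row i2 (d - y) = d - y); first by rewrite addrC subrK.
  by apply/rowP => j; rewrite !mxE (ord1 i2).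
move=> /kmax; rewrite -rankM => rank_ge.
have MM' : (M <= M')%MS by rewrite -addsmxE addsmxSl.
have [rank_le] := mxrank_leqif_sup MM'.
by rewrite col_mx_sub submx_refl eqn_leq rank_le rank_ge => /esym.
Qed.

Lemma ri_sub_convex n (C D : set 'rV[R]_n) :
  convex_rV C -> C `<=` D -> D `<=` closure C -> ri D `<=` C.
Proof.
move=> C_convex CD DC y [Dy [delta [delta_gt0 y_ri]]].
have [s [M [DM D_span]]] := affine_frame Dy.
(* In the coordinates [c] of a basis [T] of the affine hull, [y] is an interior
   point of [closure C]. *)
pose T := row_base M; have TM : (T :=: M)%MS := eq_row_base M.
pose phi c := y + c *m T; pose psi w := (w - y) *m pinvmx T.
have psiK c : psi (phi c) = c.
  by rewrite /psi /phi addrAC subrr add0r (mulmxKp (row_base_free M)).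
have phiK w : C w -> phi (psi w) = w.
  move=> Cw; rewrite /phi /psi mulmxKpV; first by rewrite addrC subrK.
  by rewrite TM; exact/D_span/CD.
have phi_aff c : aff D (phi c).
  rewrite /phi.
  have /submxP [a ->] : (c *m T <= M)%MS by rewrite -TM submxMl.
  exact: aff_comb.
suff : C (phi 0) by rewrite /phi mul0mx addr0.
apply: (@convex_closure_nbhs0 _ _ (C \o phi)).
  move=> c1 c2 mu C1 C2 mu0 mu1 /=.
  have -> : phi (mu *: c1 + (1 - mu) *: c2) = mu *: phi c1 + (1 - mu) *: phi c2.
    by rewrite /phi mulmxDl -!scalemxAl !scalerDr addrACA -scalerDl [mu + _]addrC subrK scale1r.
  exact: C_convex.
have phi_cont : continuous phi by exact: affine_rV_continuous.
have psi_cont : continuous psi.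
  have -> : psi = fun w => - (y *m pinvmx T) + w *m pinvmx T.
    by apply/funext => w; rewrite /psi mulmxBl addrC.
  exact: affine_rV_continuous.
have : nbhs (0 : 'rV[R]_(\rank M)) (phi @^-1` ball y delta).
  by apply: phi_cont; rewrite /phi mul0mx addr0; exact: nbhsx_ballx.
apply: filterS => c yc.
suff : (psi @^-1` closure (C \o phi)) (phi c) by rewrite /= psiK.
apply: (closure_sub_preimage psi_cont (@closed_closure _ _)); last first.
  by apply/DC/y_ri; split.
by move=> w Cw; apply: subset_closure; rewrite /= phiK.
Qed.

End relative_interior.

Section relative_interior_points.
Variable R : realType.

Lemma ri_ball n (D : set 'rV[R]_n) y delta p :
  ball y delta `&` aff D `<=` D -> ball y delta p -> aff D p -> ri D p.
Proof.
move=> y_ri yp Ap; split; first exact: y_ri.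
move: yp; rewrite -ball_normE /= => yp.
exists (delta - `|y - p|); split=> [|q [pq Aq]]; first by rewrite subr_gt0.
apply: y_ri; split=> //; move: pq; rewrite -!ball_normE /= => pq.
by apply: le_lt_trans (ler_distD p y q) _; rewrite -ltrBrDl.
Qed.

Lemma ri_prolong n (D : set 'rV[R]_n) y x : ri D y -> D x ->
  exists2 s0 : R, 0 < s0 & forall s, 0 < s -> s <= s0 -> ri D (y + s *: (y - x)).
Proof.
move=> [Dy [delta [delta_gt0 y_ri]]] Dx; set K := `|y - x|.
have K1_gt0 : 0 < K + 1 by apply: ltr_pwDr; rewrite ?normr_ge0.
exists (delta / (K + 1)); first by rewrite divr_gt0.
move=> s s_gt0 s_le.
apply: (ri_ball y_ri) (aff_prolong s Dy Dx); rewrite -ball_normE /=.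
rewrite opprD addrA subrr sub0r normrN normrZ gtr0_norm // -/K.
apply: (le_lt_trans (ler_wpM2r (normr_ge0 _) s_le)).
by rewrite mulrAC ltr_pdivrMr // ltr_pM2l // ltrDl.
Qed.

Lemma ri_dom_sub n m (F : 'rV[R]_n -> set 'rV[R]_m) (E : set ('rV[R]_n * 'rV[R]_m)) :
  convex_pair E -> E `<=` gph F -> gph F `<=` closure E -> ri (dom F) `<=` fst @` E.
Proof.
move=> E_convex EF FE; apply: ri_sub_convex.
- move=> _ _ mu [p Ep <-] [q Eq <-] mu0 mu1.
  by eexists; first exact: E_convex Ep Eq mu0 mu1.
- by move=> _ [p /EF Fp <-]; exists p.2.
move=> x [a Fxa].
have cl_fst : closure E `<=` fst @^-1` closure (fst @` E).
  apply: closure_sub_preimage; [by move=> ?; exact: cvg_fst | exact: closed_closure |].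
  by move=> p Ep; apply: subset_closure; exists p.
exact: (cl_fst (x, a) (FE (x, a) Fxa)).
Qed.

End relative_interior_points.

Section eps_normal.
Variables (R : realType) (n m : nat).
Implicit Types (Omega : set ('rV[R]_n * 'rV[R]_m)) (c xi : 'rV[R]_n * 'rV[R]_m).

Lemma eps_normal_closure eps c Omega :
  eps_normal eps c Omega `<=` eps_normal eps c (closure Omega).
Proof.
have dotpB xi z : dotp xi (z.1 - c.1, z.2 - c.2) = dotp xi z - dotp xi c.
  by rewrite /dotp /= !dotvBr addrACA opprD.
move=> xi xiO; have f_cont : continuous (fun z => dotp xi z - dotp xi c).
  move=> z; apply: (@continuousB R R^o _ (dotp xi) (fun=> dotp xi c)).
    exact: dotp_continuous.
  exact: cst_continuous.
move=> z /(closure_sub_preimage f_cont (@closed_le R eps)) /= le_eps.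
by rewrite dotpB; apply: le_eps => w /xiO; rewrite dotpB.
Qed.

Lemma eps_normal_ge0 eps c Omega xi : Omega c -> eps_normal eps c Omega xi -> 0 <= eps.
Proof. by move=> Oc /(_ c Oc); rewrite /dotp !subrr !dotv0r addr0. Qed.

End eps_normal.

Lemma eps_coder_sum_add (R : realType) n m (F1 F2 : 'rV[R]_n -> set 'rV[R]_m)
    e1 e2 xbar y1 y2 v u1 u2 :
  eps_coder e1 F1 xbar y1 v u1 -> eps_coder e2 F2 xbar y2 v u2 ->
  eps_coder (e1 + e2) (map_sum F1 F2) xbar (y1 + y2) v (u1 + u2).
Proof.
move=> coder1 coder2 [x y] [a [b [F1a [F2b /= ->]]]].
have := coder1 (x, a) F1a; have := coder2 (x, b) F2b.
by rewrite /dotp /= dotvDl opprD addrACA (dotvDr (- v) (a - y1)); lra.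
Qed.

Section sum_rule.
Variables (R : realType) (n m : nat) (F1 F2 : 'rV[R]_n -> set 'rV[R]_m).
Variables (E1 E2 : set ('rV[R]_n * 'rV[R]_m)).
Hypotheses (E1_convex : convex_pair E1) (E2_convex : convex_pair E2).
Hypotheses (E1_gph : E1 `<=` gph F1) (E2_gph : E2 `<=` gph F2).
Hypotheses (gph_E1 : gph F1 `<=` closure E1) (gph_E2 : gph F2 `<=` closure E2).
Variable x0 : 'rV[R]_n.
Hypotheses (x0_ri1 : ri (dom F1) x0) (x0_ri2 : ri (dom F2) x0).
Variables (eps : R) (xbar u : 'rV[R]_n) (v y1 y2 : 'rV[R]_m).
Hypothesis u_coder : eps_coder eps (map_sum F1 F2) xbar (y1 + y2) v u.

Definition sum_gap (z : 'rV[R]_n) (t : R) := exists p q, [/\ E1 p, E2 q, z = q.1 - p.1 &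
  t = dotp (u, - v) (p.1 - xbar, p.2 - y1) + dotv (- v) (q.2 - y2)].

Lemma sum_gap_convex z1 t1 z2 t2 mu : sum_gap z1 t1 -> sum_gap z2 t2 -> 0 <= mu -> mu <= 1 ->
  sum_gap (mu *: z1 + (1 - mu) *: z2) (mu * t1 + (1 - mu) * t2).
Proof.
move=> [p1 [q1 [E1p1 E2q1 -> ->]]] [p2 [q2 [E1p2 E2q2 -> ->]]] mu0 mu1.
exists (mu *: p1.1 + (1 - mu) *: p2.1, mu *: p1.2 + (1 - mu) *: p2.2).
exists (mu *: q1.1 + (1 - mu) *: q2.1, mu *: q1.2 + (1 - mu) *: q2.2); split.
- exact: E1_convex.
- exact: E2_convex.
- by apply/rowP => j; rewrite !mxE; ring.
- by rewrite /dotp /= !dotv_convexB; ring.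
Qed.

Lemma sum_gap_at0 t : sum_gap 0 t -> t <= eps.
Proof.
move=> [p [q [E1p E2q /esym/subr0_eq qp ->]]].
have F12 : gph (map_sum F1 F2) (p.1, p.2 + q.2).
  exists p.2, q.2; split; first exact: (E1_gph E1p).
  by split=> //; rewrite /= -qp; exact: (E2_gph E2q).
have := u_coder F12; rewrite /dotp /= opprD addrACA (dotvDr (- v) (p.2 - y1)); lra.
Qed.

Lemma sum_gap_opposite z t : sum_gap z t -> exists lam t', 0 < lam /\ sum_gap (- (lam *: z)) t'.
Proof.
move=> [p [q [E1p E2q -> _]]].
have [s1 s1_gt0 ri1] := ri_prolong x0_ri1 (ex_intro _ p.2 (E1_gph E1p)).
have [s2 s2_gt0 ri2] := ri_prolong x0_ri2 (ex_intro _ q.2 (E2_gph E2q)).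
pose s := Num.min s1 s2; have s_gt0 : 0 < s by rewrite lt_min s1_gt0.
have s_le1 : s <= s1 by rewrite ge_min lexx.
have s_le2 : s <= s2 by rewrite ge_min lexx orbT.
have [p' E1p' p'1] := ri_dom_sub E1_convex E1_gph gph_E1 (ri1 s s_gt0 s_le1).
have [q' E2q' q'1] := ri_dom_sub E2_convex E2_gph gph_E2 (ri2 s s_gt0 s_le2).
exists s, (dotp (u, - v) (p'.1 - xbar, p'.2 - y1) + dotv (- v) (q'.2 - y2)); split => //.
exists p', q'; split => //.
by rewrite p'1 q'1; apply/rowP => j; rewrite !mxE; ring.
Qed.

Lemma sum_rule_sub : F1 xbar y1 -> F2 xbar y2 ->
  exists e1 e2 : R, 0 <= e1 /\ 0 <= e2 /\ e1 + e2 = eps /\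
    mink_sum (eps_coder e1 F1 xbar y1 v) (eps_coder e2 F2 xbar y2 v) u.
Proof.
move=> F1y1 F2y2.
have [g g_maj] := linear_majorant sum_gap_convex sum_gap_at0 sum_gap_opposite.
pose alpha p := dotp (u + g, - v) (p.1 - xbar, p.2 - y1).
pose beta q := dotp (- g, - v) (q.1 - xbar, q.2 - y2).
have alpha_beta p q : E1 p -> E2 q -> alpha p + beta q <= eps.
  move=> E1p E2q.
  have := g_maj (q.1 - p.1) _ (ex_intro _ p (ex_intro _ q (And4 E1p E2q erefl erefl))).
  by rewrite /alpha /beta /dotp /= !dotvBr !dotvDl !dotvNl; lra.
have [p0 [E1p0 _]] := @gph_E1 (xbar, y1) F1y1 setT filterT.
have [q0 [E2q0 _]] := @gph_E2 (xbar, y2) F2y2 setT filterT.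
have [e1 [e2 [sum_e alpha_le beta_le]]] :=
  split_bound (ex_intro _ p0 E1p0) (ex_intro _ q0 E2q0) alpha_beta.
have coder1 : eps_coder e1 F1 xbar y1 v (u + g).
  by move=> p /gph_E1; apply: eps_normal_closure => p' /alpha_le.
have coder2 : eps_coder e2 F2 xbar y2 v (- g).
  by move=> q /gph_E2; apply: eps_normal_closure => q' /beta_le.
exists e1, e2; split; first exact: (@eps_normal_ge0 _ _ _ _ (xbar, y1) _ _ F1y1 coder1).
split; first exact: (@eps_normal_ge0 _ _ _ _ (xbar, y2) _ _ F2y2 coder2).
by split=> //; exists (u + g), (- g); rewrite addrK.
Qed.

End sum_rule.

Theorem mainTheorem6 (R : realType) (n m : nat)
    (F1 F2 : 'rV[R]_n -> set 'rV[R]_m) (eps : R) :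
  0 <= eps ->
  nearly_convex_map F1 -> nearly_convex_map F2 ->
  ri (dom F1) `&` ri (dom F2) !=set0 ->
  forall (xbar : 'rV[R]_n) (ybar : 'rV[R]_m),
  gph (map_sum F1 F2) (xbar, ybar) ->
  forall (v y1 y2 : 'rV[R]_m),
  ybar = y1 + y2 -> F1 xbar y1 -> F2 xbar y2 ->
  eps_coder eps (map_sum F1 F2) xbar ybar v =
  [set u | exists e1 e2 : R, 0 <= e1 /\ 0 <= e2 /\ e1 + e2 = eps /\
      mink_sum (eps_coder e1 F1 xbar y1 v) (eps_coder e2 F2 xbar y2 v) u].
Proof.
(* [0 <= eps] and [gph (map_sum F1 F2) (xbar, ybar)] are implied by the other hypotheses. *)
move=> _ [E1 [E1_convex [E1_gph gph_E1]]] [E2 [E2_convex [E2_gph gph_E2]]] [x0 [x0_ri1 x0_ri2]].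
move=> xbar ybar _ v y1 y2 -> F1y1 F2y2; apply/seteqP; split=> u.
  move=> u_coder; rewrite /mkset.
  exact: (sum_rule_sub E1_convex E2_convex E1_gph E2_gph gph_E1 gph_E2 x0_ri1 x0_ri2
    u_coder F1y1 F2y2).
move=> [e1 [e2 [_ [_ [<- [u1 [u2 [coder1 [coder2 ->]]]]]]]]].
exact: eps_coder_sum_add.
Qed.
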